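(* Let $X$ be a finite set, let $\Sigma$ be a set of implications on $X$ with closure system $\mathcal{F}_\Sigma$, and let $A\subseteq X$ be a set with $A\notin\mathcal{F}_\Sigma$. Let $\mathcal{F}_\Sigma(A)=\mathcal{F}_\Sigma\cup\{F\cap A: F\in\mathcal{F}_\Sigma\}$ and let $\Sigma(A)$ be the body-building formula. Then: (1) every member of $\mathcal{F}_\Sigma(A)$ satisfies every implication of $\Sigma(A)$; (2) every set $P\subseteq X$ with $P\not\subseteq A$ that satisfies every implication of $\Sigma(A)$ belongs to $\mathcal{F}_\Sigma(A)$; (3) if $\Sigma$ is a direct basis (of $\mathcal{F}_\Sigma$), then $\Sigma(A)$ is a basis of the closure system $\mathcal{F}_\Sigma(A)$, i.e. $\mathcal{F}_{\Sigma(A)}=\mathcal{F}_\Sigma(A)$, and moreover $\Sigma(A)$ is a direct basis of $\mathcal{F}_\Sigma(A)$.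
   Context: An implication on a finite set $X$ is a pair written $C\rightarrow d$ with $C\subseteq X$, $d\in X$. A set $Y\subseteq X$ satisfies $C\rightarrow d$ (the implication holds on $Y$) if $C\not\subseteq Y$ or $d\in Y$; otherwise the implication fails on $Y$. For a set $\Sigma$ of implications, $\mathcal{F}_\Sigma$ is the family of all $Y\subseteq X$ satisfying every implication of $\Sigma$; it is a closure system (closed under intersections, containing $X$), and $\Sigma$ is called a basis of a closure system $\mathcal{F}$ if $\mathcal{F}_\Sigma=\mathcal{F}$. The associated closure operator is $\varphi(Y)=$ the smallest member of $\mathcal{F}_\Sigma$ containing $Y$. $\Sigma$ is direct if for every $Y\subseteq X$, $\varphi(Y)=Y\cup\{d:(C\rightarrow d)\in\Sigma,\ C\subseteq Y\}$. Body-building formula: $\Sigma_t(A)$ is the set of implications of $\Sigma$ that hold on $A$, and $\Sigma_f(A)$ the set of those that fail on $A$ (i.e. $C\subseteq A$, $d\notin A$). For $\sigma=(C\rightarrow d)\in\Sigma_f(A)$ let $\sigma(A)=\{C\cup\{x\}\rightarrow d: x\in X\setminus(A\cup\{d\})\}$ (empty if $X\setminus(A\cup\{d\})=\emptyset$). Then $\Sigma(A)=\Sigma_t(A)\cup\bigcup_{\sigma\in\Sigma_f(A)}\sigma(A)$. *)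

(* The finite ground set X is the finType T (X = [set: T]).
   An implication C -> d is a pair (C, d) : {set T} * T. *)
From mathcomp Require Import all_boot.
Set Implicit Arguments. Unset Strict Implicit. Unset Printing Implicit Defensive.

Definition impl (T : finType) := ({set T} * T)%type.

Definition holds (T : finType) (Y : {set T}) (s : impl T) : bool :=
  ~~ (s.1 \subset Y) || (s.2 \in Y).

Definition fails (T : finType) (Y : {set T}) (s : impl T) : bool :=
  (s.1 \subset Y) && (s.2 \notin Y).

Definition FSigma (T : finType) (S : {set impl T}) : {set {set T}} :=
  [set Y : {set T} | [forall s in S, holds Y s]].

Definition clos (T : finType) (Fam : {set {set T}}) (Y : {set T}) : {set T} :=
  \bigcap_(F in Fam | Y \subset F) F.

Definition direct_for (T : finType) (Fam : {set {set T}}) (S : {set impl T}) : Prop :=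
  forall Y : {set T}, clos Fam Y = Y :|: [set s.2 | s in S & s.1 \subset Y].

Definition direct (T : finType) (S : {set impl T}) : Prop :=
  direct_for (FSigma S) S.

Definition Sigma_t (T : finType) (S : {set impl T}) (A : {set T}) : {set impl T} :=
  [set s in S | holds A s].

Definition Sigma_f (T : finType) (S : {set impl T}) (A : {set T}) : {set impl T} :=
  [set s in S | fails A s].

Definition sigmaA (T : finType) (A : {set T}) (s : impl T) : {set impl T} :=
  [set (s.1 :|: [set x], s.2) | x in ~: (A :|: [set s.2])].

Definition SigmaA (T : finType) (S : {set impl T}) (A : {set T}) : {set impl T} :=
  Sigma_t S A :|: \bigcup_(s in Sigma_f S A) sigmaA A s.

Definition FSigmaA (T : finType) (S : {set impl T}) (A : {set T}) : {set {set T}} :=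
  FSigma S :|: [set F :&: A | F in FSigma S].

From mathcomp Require Import all_boot.

Set Implicit Arguments. Unset Strict Implicit. Unset Printing Implicit Defensive.

(* Let [conseq S Y] be the set of conclusions of implications of [S] with
   premise in [Y]: [Y] is closed iff [conseq S Y \subset Y], and [S] is direct
   iff [Y :|: conseq S Y] is the closure of [Y].  Every refined implication of
   [SigmaA S A] has a premise leaving [A], so [A] and every member of
   [FSigma S] satisfy [SigmaA S A], hence so does [FSigmaA S A].  Conversely,
   for [Y \subset A] the sets [conseq S Y :&: A] and [conseq (SigmaA S A) Y]
   agree, while for [Y] leaving [A] a point of [Y :\: A] refines every
   implication failing on [A], so [SigmaA S A] fires whatever [S] fires outside
   [Y]. *)

Section Implications.
Variable T : finType.
Implicit Types (S : {set impl T}) (A Y Z P F G : {set T}) (s : impl T).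

Definition conseq S Y : {set T} := [set s.2 | s in S & s.1 \subset Y].

Lemma holdsP Y s : reflect (s.1 \subset Y -> s.2 \in Y) (holds Y s).
Proof. by rewrite /holds -implybE; apply: implyP. Qed.

Lemma FSigmaP S Y : reflect (forall s, s \in S -> holds Y s) (Y \in FSigma S).
Proof. by rewrite inE; apply: forall_inP. Qed.

Lemma mem_conseq S Y s : s \in S -> s.1 \subset Y -> s.2 \in conseq S Y.
Proof. by move=> sS sY; apply/imsetP; exists s; rewrite // inE sS. Qed.

Lemma conseqP S Y y :
  reflect (exists2 s, s \in S /\ s.1 \subset Y & y = s.2) (y \in conseq S Y).
Proof.
apply: (iffP imsetP) => [[s] | [s [sS sY] ->]]; last by exists s; rewrite // inE sS.
by rewrite inE => /andP[sS sY] ->; exists s.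
Qed.

Lemma conseqS S Y Z : Y \subset Z -> conseq S Y \subset conseq S Z.
Proof.
move=> YZ; apply/subsetP => _ /conseqP[s [sS sY] ->].
by apply: mem_conseq sS (subset_trans sY YZ).
Qed.

Lemma FSigma_conseq S Y : (Y \in FSigma S) = (conseq S Y \subset Y).
Proof.
apply/FSigmaP/subsetP => [Ycl _ /conseqP[s [sS sY] ->] | conseqY s sS].
  exact: (holdsP _ _ (Ycl s sS)).
by apply/holdsP => sY; apply/conseqY/mem_conseq.
Qed.

Lemma FSigmaI S F G : F \in FSigma S -> G \in FSigma S -> F :&: G \in FSigma S.
Proof.
rewrite !FSigma_conseq subsetI => Fcl Gcl; apply/andP; split.
  exact: subset_trans (conseqS S (subsetIl F G)) Fcl.
exact: subset_trans (conseqS S (subsetIr F G)) Gcl.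
Qed.

Lemma clos_FSigma S Y : clos (FSigma S) Y \in FSigma S.
Proof.
apply/FSigmaP => s sS; apply/holdsP => sC; apply/bigcapP => F /andP[Fcl YF].
apply: (holdsP _ _ (FSigmaP _ _ Fcl s sS)); apply: subset_trans sC _.
by apply: bigcap_inf; rewrite Fcl.
Qed.

Lemma direct_closed S Y : direct S -> Y :|: conseq S Y \in FSigma S.
Proof. by move=> dirS; rewrite /conseq -dirS; apply: clos_FSigma. Qed.

Lemma direct_for_FSigma S :
  (forall Y, exists G, [/\ G \in FSigma S, Y \subset G & G \subset Y :|: conseq S Y]) ->
  direct_for (FSigma S) S.
Proof.
move=> hasG Y; apply/eqP; rewrite eqEsubset; apply/andP; split.
  have [G [Gcl YG GY]] := hasG Y.
  by apply: subset_trans GY; apply: bigcap_inf; rewrite Gcl.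
apply/subsetP => y yY; apply/bigcapP => F /andP[Fcl YF].
move: yY; rewrite inE => /orP[/(subsetP YF) // | yc].
by move: Fcl; rewrite FSigma_conseq => /subsetP; apply; apply: subsetP yc; apply: conseqS.
Qed.

Variables (S : {set impl T}) (A : {set T}).

Variant SigmaA_spec : impl T -> Prop :=
  | SigmaA_kept s of s \in S & holds A s : SigmaA_spec s
  | SigmaA_refined s x of s \in S & fails A s & x \notin A & x != s.2 :
      SigmaA_spec (s.1 :|: [set x], s.2).

Lemma SigmaAP s : s \in SigmaA S A -> SigmaA_spec s.
Proof.
rewrite in_setU inE => /orP[/andP[sS sA] | /bigcupP[s0]]; first exact: SigmaA_kept.
rewrite inE => /andP[s0S s0A] /imsetP[x]; rewrite !inE negb_or => /andP[xA xd] ->.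
exact: SigmaA_refined.
Qed.

Lemma mem_SigmaA_kept s : s \in S -> holds A s -> s \in SigmaA S A.
Proof. by move=> sS sA; rewrite in_setU inE sS sA. Qed.

Lemma mem_SigmaA_refined s x : s \in S -> fails A s -> x \notin A -> x != s.2 ->
  (s.1 :|: [set x], s.2) \in SigmaA S A.
Proof.
move=> sS sA xA xd; rewrite in_setU; apply/orP; right; apply/bigcupP.
exists s; first by rewrite inE sS sA.
by apply/imsetP; exists x; rewrite // !inE negb_or xA xd.
Qed.

Lemma A_in_FSigma_SigmaA : A \in FSigma (SigmaA S A).
Proof.
apply/FSigmaP => _ /SigmaAP[s _ // | s x _ _ xA _]; apply/holdsP => /=.
by rewrite subUset sub1set (negbTE xA) andbF.
Qed.

Lemma FSigma_sub_SigmaA : FSigma S \subset FSigma (SigmaA S A).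
Proof.
apply/subsetP => F /FSigmaP Fcl; apply/FSigmaP => _ /SigmaAP[s sS _ | s x sS _ _ _].
  exact: Fcl.
apply/holdsP; rewrite subUset => /andP[sF _].
exact: (holdsP _ _ (Fcl s sS)).
Qed.

Lemma FSigmaA_sub_SigmaA : FSigmaA S A \subset FSigma (SigmaA S A).
Proof.
apply/subsetP => Y; rewrite in_setU => /orP[/(subsetP FSigma_sub_SigmaA) // |].
case/imsetP => F Fcl ->; apply: FSigmaI A_in_FSigma_SigmaA.
exact: subsetP FSigma_sub_SigmaA F Fcl.
Qed.

Lemma conseqI_SigmaA Y : Y \subset A -> conseq S Y :&: A \subset conseq (SigmaA S A) Y.
Proof.
move=> YA; apply/subsetP => _ /setIP[/conseqP[s [sS sY] ->] dA].
by apply: mem_conseq sY; apply: mem_SigmaA_kept sS _; apply/holdsP.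
Qed.

Lemma conseq_SigmaA Y : ~~ (Y \subset A) ->
  conseq S Y \subset Y :|: conseq (SigmaA S A) Y.
Proof.
case/subsetPn => x xY xA; apply/subsetP => _ /conseqP[s [sS sY] ->].
have [sA | sA] := boolP (holds A s).
  by rewrite inE (mem_conseq (mem_SigmaA_kept sS sA) sY) orbT.
have [<- | xd] := eqVneq x s.2; first by rewrite inE xY.
have sfA : fails A s by move: sA; rewrite /holds negb_or negbK.
rewrite inE (mem_conseq (mem_SigmaA_refined sS sfA xA xd)) ?orbT //=.
by rewrite subUset sY sub1set.
Qed.

Lemma FSigma_SigmaA_notsub P : ~~ (P \subset A) ->
  P \in FSigma (SigmaA S A) -> P \in FSigma S.
Proof.
move=> PA; rewrite !FSigma_conseq => Pcl.
by apply: subset_trans (conseq_SigmaA PA) _; rewrite subUset subxx.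
Qed.

Hypothesis dirS : direct S.

Lemma FSigma_SigmaA : FSigma (SigmaA S A) = FSigmaA S A.
Proof.
apply/eqP; rewrite eqEsubset FSigmaA_sub_SigmaA andbT; apply/subsetP => P Pcl.
have [PA | PA] := boolP (P \subset A); last first.
  by rewrite in_setU FSigma_SigmaA_notsub.
rewrite in_setU; apply/orP; right; apply/imsetP.
exists (P :|: conseq S P); first exact: direct_closed.
apply/eqP; rewrite eqEsubset subsetI subsetUl PA /= setIUl subUset subsetIl /=.
by apply: subset_trans (conseqI_SigmaA PA) _; rewrite -FSigma_conseq.
Qed.

Lemma direct_SigmaA : direct_for (FSigma (SigmaA S A)) (SigmaA S A).
Proof.
apply: direct_for_FSigma => Y; rewrite FSigma_SigmaA.
have Ycl := direct_closed Y dirS.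
have [YA | YA] := boolP (Y \subset A).
  exists ((Y :|: conseq S Y) :&: A); split.
  - by rewrite in_setU; apply/orP; right; apply/imsetP; exists (Y :|: conseq S Y).
  - by rewrite subsetI subsetUl YA.
  rewrite setIUl setUSS ?subsetIl //; exact: conseqI_SigmaA.
exists (Y :|: conseq S Y); split; first by rewrite in_setU Ycl.
  exact: subsetUl.
by rewrite subUset subsetUl conseq_SigmaA.
Qed.

End Implications.

Theorem mainTheorem1 (T : finType) (S : {set impl T}) (A : {set T}) :
  A \notin FSigma S ->
  [/\ (forall Y, Y \in FSigmaA S A -> forall s, s \in SigmaA S A -> holds Y s),
      (forall P : {set T}, ~~ (P \subset A) ->
         (forall s, s \in SigmaA S A -> holds P s) -> P \in FSigmaA S A)
    & (direct S ->
         FSigma (SigmaA S A) = FSigmaA S A /\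
         direct_for (FSigmaA S A) (SigmaA S A))].
Proof.
move=> _; split.
- by move=> Y /(subsetP (FSigmaA_sub_SigmaA S A)) /FSigmaP.
- by move=> P PA /FSigmaP Pcl; rewrite in_setU (FSigma_SigmaA_notsub PA Pcl).
- move=> dirS; rewrite -(FSigma_SigmaA A dirS).
  by split=> //; apply: direct_SigmaA.
Qed.
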